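(* The Kelvin circulation theorem for the current alone is given by, \begin{align} \frac{d}{dt}\oint_{c(\mathbf{\widehat v})} \mathbf{\widehat{v}}\cdot d\mathbf{r} = - \oint_{c(\mathbf{\widehat v})} \frac{1}{\rho}dp - d \frac{|\mathbf{\widehat{v}}|^2}{2} \,. \end{align}
   Context: Setting: a 2D free surface model in which the horizontal current velocity $\mathbf{\widehat v}(\mathbf{r},t)$ transports a vertical wave elevation $\zeta(\mathbf{r},t)$ with vertical velocity $\widehat{w} = \partial_t\zeta + \mathbf{\widehat{v}}\cdot\nabla_{\mathbf{r}}\zeta$, derived from Hamilton's principle with Lagrangian $\ell=\int_{\cal D}\Big( \tfrac{1}{2}\big( |\mathbf{\widehat{v}}|^2 + \sigma^2\widehat w^2 \big) - \tfrac{\rho_{ref}}{\rho} \tfrac{\zeta^2}{2Fr^2} \Big) D\rho - p(D-1)\,d^2r$, with constants $\sigma^2, Fr^2,\rho_{ref}$, advected areal density $D\,d^2r$ and buoyancy $\rho$, and pressure $p$ enforcing $D=1$ ($\mathrm{div}\,\mathbf{\widehat v}=0$). The full Kelvin theorem for this model reads $\frac{d}{dt}\oint_{c(\mathbf{\widehat v})} ( \mathbf{\widehat{v}}\cdot d\mathbf{r} + \sigma^2\widehat{w}\,d\zeta) = \oint_{c(\mathbf{\widehat v})} -\rho^{-1} d\widetilde p + d\widetilde\varpi$ with $\widetilde p = p+\rho_{ref}\zeta^2/(2Fr^2)$, $\widetilde\varpi=\tfrac12(|\mathbf{\widehat v}|^2+\sigma^2\widehat w^2)$, and the wave equations $(\partial_t+\mathbf{\widehat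 v}\cdot\nabla)\widehat w = -\rho_{ref}\zeta/(\sigma^2Fr^2\rho)$, $(\partial_t+\mathbf{\widehat v}\cdot\nabla)\zeta=\widehat w$. The loop $c(\mathbf{\widehat v})$ moves with the horizontal flow. *)

From Stdlib Require Import Reals.
From Coquelicot Require Import Coquelicot.
Open Scope R_scope.

(* A (scalar) space-time field on the horizontal plane: f x y t. *)
Definition field := R -> R -> R -> R.

Definition unc3 (f : field) (q : R * R * R) : R :=
  f (fst (fst q)) (snd (fst q)) (snd q).

Definition d_x (f : field) : field := fun x y t => Derive (fun x' => f x' y t) x.
Definition d_y (f : field) : field := fun x y t => Derive (fun y' => f x y' t) y.
Definition d_t (f : field) : field := fun x y t => Derive (fun t' => f x y t') t.

Definition C1_field (f : field) : Prop :=
  forall q : R * R * R,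
    ex_filterdiff (unc3 f) (locally q) /\
    continuous (unc3 (d_x f)) q /\ continuous (unc3 (d_y f)) q /\
    continuous (unc3 (d_t f)) q.

Definition C2_field (f : field) : Prop :=
  C1_field f /\ C1_field (d_x f) /\ C1_field (d_y f) /\ C1_field (d_t f).

(* two-parameter maps (t, s) for the moving loop *)
Definition unc2 (g : R -> R -> R) (q : R * R) : R := g (fst q) (snd q).
Definition p_t (g : R -> R -> R) : R -> R -> R := fun t s => Derive (fun t' => g t' s) t.
Definition p_s (g : R -> R -> R) : R -> R -> R := fun t s => Derive (fun s' => g t s') s.

Definition C1_map2 (g : R -> R -> R) : Prop :=
  forall q : R * R,
    ex_filterdiff (unc2 g) (locally q) /\
    continuous (unc2 (p_t g)) q /\ continuous (unc2 (p_s g)) q.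

Definition C2_map2 (g : R -> R -> R) : Prop :=
  C1_map2 g /\ C1_map2 (p_t g) /\ C1_map2 (p_s g).

Definition mat_deriv (v1 v2 f : field) : field :=
  fun x y t => d_t f x y t + v1 x y t * d_x f x y t + v2 x y t * d_y f x y t.

Definition xcoord : field := fun x _ _ => x.
Definition ycoord : field := fun _ y _ => y.
Definition one_field : field := fun _ _ _ => 1.

(* Loop integral  \oint_{c(t)} f dg  along the loop c(t) = s |-> (X t s, Y t s),
   s in [0,1]:  int_0^1 f(c(t,s),t) d/ds[ g(c(t,s),t) ] ds. *)
Definition oint (X Y : R -> R -> R) (t : R) (f g : field) : R :=
  RInt (fun s => f (X t s) (Y t s) t * Derive (fun s' => g (X t s') (Y t s') t) s) 0 1.

(* Subtract from the full Kelvin theorem the time derivative of the wave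
   circulation [oint sigma2 w dzeta].  For a loop transported by the flow,
   d/dt oint g df = oint (Dg/Dt) df + oint g d(Df/Dt): differentiate under the
   integral sign, then exchange the t- and s-derivatives of f along the loop by
   Schwarz's theorem.  With Dzeta/Dt = w and the wave equation for w, this
   derivative is -(rho_ref/Fr2) oint (zeta/rho) dzeta + sigma2 oint w dw, which
   is exactly the wave part -oint rho^-1 d(rho_ref zeta^2/(2 Fr2)) + oint
   d(sigma2 w^2/2) of the right-hand side of the full theorem. *)

From Stdlib Require Import Reals Lra.
From Coquelicot Require Import Coquelicot.
Open Scope R_scope.

Lemma filterdiff_pair {K : AbsRing} {T U V : NormedModule K}
    (f : T -> U) (g : T -> V) (x : T) (lf : T -> U) (lg : T -> V) :
  filterdiff f (locally x) lf -> filterdiff g (locally x) lg ->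
  filterdiff (fun y => (f y, g y) : prod_NormedModule K U V) (locally x)
    (fun y => (lf y, lg y)).
Proof.
  intros Hf Hg.
  apply (filterdiff_comp'_2 f g pair x lf lg pair Hf Hg).
  apply filterdiff_ext with (f := fun z => z); [now intros []|].
  apply filterdiff_ext_lin with (l1 := fun z => z); [apply filterdiff_id | now intros []].
Qed.

Lemma is_derive_pair {U V : NormedModule R_AbsRing} (a : R -> U) (b : R -> V)
    (x : R) (da : U) (db : V) :
  is_derive a x da -> is_derive b x db ->
  is_derive (fun u => (a u, b u) : prod_NormedModule R_AbsRing U V) x (da, db).
Proof.
  intros Ha Hb.
  eapply filterdiff_ext_lin; [exact (filterdiff_pair _ _ _ _ _ Ha Hb) | reflexivity].
Qed.

Lemma is_derive_filterdiff_comp {V W : NormedModule R_AbsRing}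
    (F : V -> W) (c : R -> V) (x : R) (dc : V) (l : V -> W) :
  is_derive c x dc -> filterdiff F (locally (c x)) l ->
  is_derive (fun u => F (c u)) x (l dc).
Proof.
  intros Hc HF.
  eapply filterdiff_ext_lin; [exact (filterdiff_comp' _ _ _ _ _ Hc HF)|].
  intros y. exact (linear_scal l (proj1 HF) y dc).
Qed.

Lemma is_derive_id_R (x : R) : is_derive (fun u : R => u) x 1.
Proof. exact (@is_derive_id R_AbsRing x). Qed.

Lemma is_derive_const_R (c x : R) : is_derive (fun _ : R => c) x 0.
Proof. exact (@is_derive_const R_AbsRing R_NormedModule c x). Qed.

Lemma linear_R3_coords
    (l : prod_NormedModule R_AbsRing
           (prod_NormedModule R_AbsRing R_NormedModule R_NormedModule) R_NormedModule
         -> R_NormedModule) (a b c : R) :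
  is_linear l ->
  l ((a, b), c) = l ((1, 0), 0) * a + l ((0, 1), 0) * b + l ((0, 0), 1) * c.
Proof.
  intros Hl.
  replace ((a, b), c) with
    (plus (plus (scal a ((1, 0), 0)) (scal b ((0, 1), 0))) (scal c ((0, 0), 1))
     : prod_NormedModule _ (prod_NormedModule _ R_NormedModule R_NormedModule) R_NormedModule).
  - rewrite !(linear_plus l Hl), !(linear_scal l Hl). cbv [plus scal]; cbn. ring.
  - cbv -[Rplus Rmult]. f_equal; [f_equal|]; ring.
Qed.

Lemma is_derive_unc3_comp (f : field) (a b c : R -> R) (x da db dc : R) l :
  filterdiff (unc3 f) (locally ((a x, b x), c x)) l ->
  is_derive a x da -> is_derive b x db -> is_derive c x dc ->
  is_derive (fun u => f (a u) (b u) (c u)) x (l ((da, db), dc)).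
Proof.
  intros Hf Ha Hb Hc.
  exact (is_derive_filterdiff_comp (unc3 f) _ x _ l
           (is_derive_pair _ _ x _ _ (is_derive_pair _ _ x _ _ Ha Hb) Hc) Hf).
Qed.

Lemma is_derive_field_comp (f : field) (a b c : R -> R) (x da db dc : R) :
  ex_filterdiff (unc3 f) (locally ((a x, b x), c x)) ->
  is_derive a x da -> is_derive b x db -> is_derive c x dc ->
  is_derive (fun u => f (a u) (b u) (c u)) x
    (d_x f (a x) (b x) (c x) * da + d_y f (a x) (b x) (c x) * db
     + d_t f (a x) (b x) (c x) * dc).
Proof.
  intros [l Hf] Ha Hb Hc.
  assert (Hl := proj1 Hf).
  replace (d_x f (a x) (b x) (c x)) with (l ((1, 0), 0)).
  2:{ symmetry; apply is_derive_unique.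
      apply (is_derive_unc3_comp f (fun u => u) (fun _ => b x) (fun _ => c x));
        auto using is_derive_id_R, is_derive_const_R. }
  replace (d_y f (a x) (b x) (c x)) with (l ((0, 1), 0)).
  2:{ symmetry; apply is_derive_unique.
      apply (is_derive_unc3_comp f (fun _ => a x) (fun u => u) (fun _ => c x));
        auto using is_derive_id_R, is_derive_const_R. }
  replace (d_t f (a x) (b x) (c x)) with (l ((0, 0), 1)).
  2:{ symmetry; apply is_derive_unique.
      apply (is_derive_unc3_comp f (fun _ => a x) (fun _ => b x) (fun u => u));
        auto using is_derive_id_R, is_derive_const_R. }
  rewrite <- (linear_R3_coords l da db dc Hl).
  exact (is_derive_unc3_comp f a b c x da db dc l Hf Ha Hb Hc).
Qed.

Lemma is_derive_p_s (g : R -> R -> R) (t s : R) :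
  ex_filterdiff (unc2 g) (locally (t, s)) -> is_derive (fun s' => g t s') s (p_s g t s).
Proof.
  intros [l Hg]. apply Derive_correct. exists (l (0, 1)).
  exact (is_derive_filterdiff_comp (unc2 g) (fun s' => (t, s')) s (0, 1) l
           (is_derive_pair _ _ s _ _ (is_derive_const_R t s) (is_derive_id_R s)) Hg).
Qed.

Lemma is_derive_p_t (g : R -> R -> R) (t s : R) :
  ex_filterdiff (unc2 g) (locally (t, s)) -> is_derive (fun t' => g t' s) t (p_t g t s).
Proof.
  intros [l Hg]. apply Derive_correct. exists (l (1, 0)).
  exact (is_derive_filterdiff_comp (unc2 g) (fun t' => (t', s)) t (1, 0) l
           (is_derive_pair _ _ t _ _ (is_derive_id_R t) (is_derive_const_R s t)) Hg).
Qed.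

Lemma continuous_pair {U V W : UniformSpace} (f : U -> V) (g : U -> W) (x : U) :
  continuous f x -> continuous g x -> continuous (fun y => (f y, g y)) x.
Proof.
  intros Hf Hg. apply (continuous_comp_2 f g pair); [exact Hf | exact Hg |].
  apply continuous_ext with (f := fun z => z); [now intros [] | apply continuous_id].
Qed.

Definition continuous2 (h : R -> R -> R) : Prop := forall q, continuous (unc2 h) q.

Lemma C1_map2_continuous2 (g : R -> R -> R) : C1_map2 g -> continuous2 g.
Proof. intros Hg q. exact (filterdiff_continuous _ q (proj1 (Hg q))). Qed.

Lemma C1_field_continuous (f : field) (q : R * R * R) :
  C1_field f -> continuous (unc3 f) q.
Proof. intros Hf. exact (filterdiff_continuous _ q (proj1 (Hf q))). Qed.

Lemma continuous2_plus (g h : R -> R -> R) :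
  continuous2 g -> continuous2 h -> continuous2 (fun t s => g t s + h t s).
Proof. intros Hg Hh q. exact (continuous_plus (unc2 g) (unc2 h) q (Hg q) (Hh q)). Qed.

Lemma continuous2_mult (g h : R -> R -> R) :
  continuous2 g -> continuous2 h -> continuous2 (fun t s => g t s * h t s).
Proof. intros Hg Hh q. exact (continuous_mult (unc2 g) (unc2 h) q (Hg q) (Hh q)). Qed.

Lemma continuous2_inv (h : R -> R -> R) :
  continuous2 h -> (forall t s, h t s <> 0) -> continuous2 (fun t s => / h t s).
Proof.
  intros Hh Hnz [t s].
  apply (continuous_comp (unc2 h) Rinv); [apply Hh | apply continuous_Rinv, Hnz].
Qed.

Lemma continuity_2d_pt_continuous2 (h : R -> R -> R) (t s : R) :
  continuous2 h -> continuity_2d_pt h t s.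
Proof. intros Hh. apply continuity_2d_pt_filterlim, Hh. Qed.

Lemma ex_RInt_continuous2 (h : R -> R -> R) (t a b : R) :
  continuous2 h -> ex_RInt (h t) a b.
Proof.
  intros Hh. apply (@ex_RInt_continuous R_CompleteNormedModule). intros s _.
  apply (continuous_comp (fun s' => (t, s')) (unc2 h)); [|apply Hh].
  apply continuous_pair; [apply continuous_const | apply continuous_id].
Qed.

(* Stated at type [R] (not a normed-module carrier) so that [ring] and [field]
   apply to the pointwise goal. *)
Lemma RInt_ext_R (f g : R -> R) (a b : R) :
  (forall x, Rmin a b < x < Rmax a b -> f x = g x) -> RInt f a b = RInt g a b.
Proof. exact (RInt_ext f g a b). Qed.

Lemma RInt_plus_R (f g : R -> R) (a b : R) :
  ex_RInt f a b -> ex_RInt g a b ->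
  RInt (fun s => f s + g s) a b = RInt f a b + RInt g a b.
Proof. exact (RInt_plus f g a b). Qed.

Lemma RInt_scal_R (f : R -> R) (a b c : R) :
  ex_RInt f a b -> RInt (fun s => c * f s) a b = c * RInt f a b.
Proof. exact (RInt_scal f a b c). Qed.

Definition along (X Y : R -> R -> R) (f : field) : R -> R -> R :=
  fun t s => f (X t s) (Y t s) t.

Lemma continuous2_along (X Y : R -> R -> R) (f : field) :
  (forall q, continuous (unc3 f) q) -> continuous2 X -> continuous2 Y ->
  continuous2 (along X Y f).
Proof.
  intros Hf HX HY [t s].
  apply (continuous_comp (fun q : R * R => ((unc2 X q, unc2 Y q), fst q)) (unc3 f));
    [|apply Hf].
  apply continuous_pair; [apply continuous_pair; [apply HX | apply HY] | apply continuous_fst].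
Qed.

Section MovingLoop.

Variables (v1 v2 : field) (X Y : R -> R -> R).
Hypotheses (Hv1 : C1_field v1) (Hv2 : C1_field v2).
Hypotheses (HX : C1_map2 X) (HY : C1_map2 Y).
Hypotheses (HXs : C1_map2 (p_s X)) (HYs : C1_map2 (p_s Y)).
Hypothesis HflowX : forall t s, is_derive (fun t' => X t' s) t (v1 (X t s) (Y t s) t).
Hypothesis HflowY : forall t s, is_derive (fun t' => Y t' s) t (v2 (X t s) (Y t s) t).

Definition ds_along (f : field) (t s : R) : R :=
  along X Y (d_x f) t s * p_s X t s + along X Y (d_y f) t s * p_s Y t s.

Definition dt_ds_along (f : field) (t s : R) : R :=
  along X Y (mat_deriv v1 v2 (d_x f)) t s * p_s X t s
  + along X Y (d_x f) t s * p_t (p_s X) t s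
  + (along X Y (mat_deriv v1 v2 (d_y f)) t s * p_s Y t s
     + along X Y (d_y f) t s * p_t (p_s Y) t s).

Lemma is_derive_along_s (f : field) (t s : R) :
  C1_field f -> is_derive (fun s' => along X Y f t s') s (ds_along f t s).
Proof.
  intros Hf.
  pose proof (is_derive_field_comp f (X t) (Y t) (fun _ => t) s _ _ _ (proj1 (Hf _))
              (is_derive_p_s X t s (proj1 (HX _))) (is_derive_p_s Y t s (proj1 (HY _)))
              (is_derive_const_R t s)) as H.
  rewrite Rmult_0_r, Rplus_0_r in H. exact H.
Qed.

Lemma Derive_along (f : field) (t s : R) :
  C1_field f -> Derive (fun s' => along X Y f t s') s = ds_along f t s.
Proof. intros Hf. apply is_derive_unique, is_derive_along_s, Hf. Qed.

Lemma is_derive_along_t (f : field) (t s : R) :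
  C1_field f ->
  is_derive (fun t' => along X Y f t' s) t (along X Y (mat_deriv v1 v2 f) t s).
Proof.
  intros Hf.
  pose proof (is_derive_field_comp f (fun t' => X t' s) (fun t' => Y t' s) (fun t' => t') t
              _ _ _ (proj1 (Hf _)) (HflowX t s) (HflowY t s) (is_derive_id_R t)) as H.
  replace (along X Y (mat_deriv v1 v2 f) t s) with
    (d_x f (X t s) (Y t s) t * v1 (X t s) (Y t s) t
     + d_y f (X t s) (Y t s) t * v2 (X t s) (Y t s) t + d_t f (X t s) (Y t s) t * 1)
    by (unfold along, mat_deriv; ring).
  exact H.
Qed.

Lemma is_derive_ds_along_t (f : field) (t s : R) :
  C1_field (d_x f) -> C1_field (d_y f) ->
  is_derive (fun t' => ds_along f t' s) t (dt_ds_along f t s).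
Proof.
  intros Hfx Hfy.
  exact (is_derive_plus _ _ t _ _
    (is_derive_mult _ _ t _ _ (is_derive_along_t (d_x f) t s Hfx)
       (is_derive_p_t (p_s X) t s (proj1 (HXs _))) Rmult_comm)
    (is_derive_mult _ _ t _ _ (is_derive_along_t (d_y f) t s Hfy)
       (is_derive_p_t (p_s Y) t s (proj1 (HYs _))) Rmult_comm)).
Qed.

Lemma continuous2_along_C1 (f : field) : C1_field f -> continuous2 (along X Y f).
Proof.
  intros Hf. apply continuous2_along; [intros q; apply C1_field_continuous, Hf | |];
    apply C1_map2_continuous2; assumption.
Qed.

Lemma continuous2_along_partials (f : field) :
  C1_field f ->
  continuous2 (along X Y (d_x f)) /\ continuous2 (along X Y (d_y f)) /\
  continuous2 (along X Y (d_t f)).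
Proof.
  intros Hf.
  split; [|split]; apply continuous2_along; try (apply C1_map2_continuous2; assumption);
    intros q; apply (Hf q).
Qed.

Lemma continuous2_along_mat_deriv (f : field) :
  C1_field f -> continuous2 (along X Y (mat_deriv v1 v2 f)).
Proof.
  intros Hf. destruct (continuous2_along_partials f Hf) as [Hx [Hy Ht]].
  unfold along, mat_deriv.
  repeat apply continuous2_plus; try apply continuous2_mult; try assumption;
    apply continuous2_along_C1; assumption.
Qed.

Lemma continuous2_ds_along (f : field) : C1_field f -> continuous2 (ds_along f).
Proof.
  intros Hf. destruct (continuous2_along_partials f Hf) as [Hx [Hy _]].
  apply continuous2_plus; apply continuous2_mult; try assumption; intros q.
  - apply (HX q).
  - apply (HY q).
Qed.

Lemma continuous2_dt_ds_along (f : field) :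
  C1_field (d_x f) -> C1_field (d_y f) -> continuous2 (dt_ds_along f).
Proof.
  intros Hfx Hfy.
  repeat apply continuous2_plus; apply continuous2_mult;
    try (apply continuous2_along_mat_deriv || apply continuous2_along_C1; assumption);
    intros q; [apply (HX q) | apply (HXs q) | apply (HY q) | apply (HYs q)].
Qed.

(* Schwarz's theorem for [along X Y f]: the t-derivative of its s-derivative is
   the s-derivative of its t-derivative, the material derivative [m]. *)
Lemma dt_ds_along_material (f m : field) (t s : R) :
  C1_field f -> C1_field (d_x f) -> C1_field (d_y f) -> C1_field m ->
  (forall x y t, mat_deriv v1 v2 f x y t = m x y t) ->
  dt_ds_along f t s = ds_along m t s.
Proof.
  intros Hf Hfx Hfy Hm Hfm.
  set (F := along X Y f).
  assert (DT : forall u v, Derive (fun z => F z v) u = along X Y m u v).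
  { intros u v. apply is_derive_unique.
    replace (along X Y m u v) with (along X Y (mat_deriv v1 v2 f) u v) by apply Hfm.
    apply is_derive_along_t, Hf. }
  assert (DST : forall u v,
            is_derive (fun z => Derive (fun t => F z t) v) u (dt_ds_along f u v)).
  { intros u v. apply (is_derive_ext (fun z => ds_along f z v));
      [intros; symmetry; apply Derive_along, Hf|].
    apply is_derive_ds_along_t; assumption. }
  assert (DTS : forall u v,
            is_derive (fun z => Derive (fun t => F t z) u) v (ds_along m u v)).
  { intros u v. apply (is_derive_ext (fun z => along X Y m u z)); [intros; now rewrite DT|].
    apply is_derive_along_s, Hm. }
  rewrite <- (is_derive_unique _ _ _ (DST t s)), <- (is_derive_unique _ _ _ (DTS t s)).
  apply Schwarz.
  - exists (mkposreal 1 Rlt_0_1). intros u v _ _.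
    repeat split; eexists; [| | apply DST | apply DTS].
    + apply is_derive_along_t, Hf.
    + apply is_derive_along_s, Hf.
  - apply (continuity_2d_pt_ext (dt_ds_along f));
      [intros; symmetry; apply is_derive_unique, DST|].
    apply continuity_2d_pt_continuous2, continuous2_dt_ds_along; assumption.
  - apply (continuity_2d_pt_ext (ds_along m));
      [intros; symmetry; apply is_derive_unique, DTS|].
    apply continuity_2d_pt_continuous2, continuous2_ds_along, Hm.
Qed.

Lemma oint_is_derive (g f : field) (t : R) (df : R -> R) :
  (forall s, is_derive (fun s' => along X Y f t s') s (df s)) ->
  oint X Y t g f = RInt (fun s => along X Y g t s * df s) 0 1.
Proof. intros Hdf. apply RInt_ext. intros s _. f_equal. apply is_derive_unique, Hdf. Qed.

Lemma oint_along (g f : field) (t : R) :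
  C1_field f -> oint X Y t g f = RInt (fun s => along X Y g t s * ds_along f t s) 0 1.
Proof. intros Hf. apply oint_is_derive. intros s. apply is_derive_along_s, Hf. Qed.

Lemma ex_RInt_along_ds (g f : field) (t a b : R) :
  continuous2 (along X Y g) -> C1_field f ->
  ex_RInt (fun s => along X Y g t s * ds_along f t s) a b.
Proof.
  intros Hg Hf. apply (ex_RInt_continuous2 (fun u s => along X Y g u s * ds_along f u s)).
  apply continuous2_mult; [exact Hg | apply continuous2_ds_along, Hf].
Qed.

Lemma is_derive_oint (g f m : field) (t : R) :
  C1_field g -> C1_field f -> C1_field (d_x f) -> C1_field (d_y f) -> C1_field m ->
  (forall x y t, mat_deriv v1 v2 f x y t = m x y t) ->
  is_derive (fun t' => oint X Y t' g f) t
    (oint X Y t (mat_deriv v1 v2 g) f + oint X Y t g m).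
Proof.
  intros Hg Hf Hfx Hfy Hm Hfm.
  set (I := fun u s => along X Y g u s * ds_along f u s).
  set (dI := fun u s => along X Y (mat_deriv v1 v2 g) u s * ds_along f u s
                        + along X Y g u s * dt_ds_along f u s).
  assert (DI : forall u s, is_derive (fun z => I z s) u (dI u s)).
  { intros u s. exact (is_derive_mult _ _ u _ _ (is_derive_along_t g u s Hg)
                         (is_derive_ds_along_t f u s Hfx Hfy) Rmult_comm). }
  assert (HI : continuous2 I).
  { apply continuous2_mult; [apply continuous2_along_C1 | apply continuous2_ds_along];
      assumption. }
  assert (HdI : continuous2 dI).
  { apply continuous2_plus; apply continuous2_mult;
      first [ apply continuous2_along_mat_deriv | apply continuous2_along_C1
            | apply continuous2_ds_along | apply continuous2_dt_ds_along ]; assumption. }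
  apply (is_derive_ext (fun t' => RInt (I t') 0 1));
    [intros; symmetry; apply oint_along, Hf|].
  rewrite !oint_along by assumption.
  rewrite <- RInt_plus_R
    by (apply ex_RInt_along_ds;
        first [apply continuous2_along_mat_deriv | apply continuous2_along_C1 | idtac];
        assumption).
  replace (RInt _ 0 1) with (RInt (fun s => Derive (fun u => I u s) t) 0 1).
  - apply is_derive_RInt_param.
    + apply filter_forall. intros u s _. eexists. apply DI.
    + intros s _. apply (continuity_2d_pt_ext dI);
        [intros; symmetry; apply is_derive_unique, DI|].
      apply continuity_2d_pt_continuous2, HdI.
    + apply filter_forall. intros u. apply ex_RInt_continuous2, HI.
  - apply RInt_ext. intros s _. transitivity (dI t s); [apply is_derive_unique, DI|].
    unfold dI. now rewrite (dt_ds_along_material f m t s).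
Qed.

Lemma oint_scal_l (c : R) (g f : field) (t : R) :
  continuous2 (along X Y g) -> C1_field f ->
  oint X Y t (fun x y t0 => c * g x y t0) f = c * oint X Y t g f.
Proof.
  intros Hg Hf. rewrite !oint_along, <- RInt_scal_R by auto using ex_RInt_along_ds.
  apply RInt_ext_R. intros s _. unfold along. ring.
Qed.

End MovingLoop.

Section CurrentCirculation.

Variables (sigma2 Fr2 rho_ref : R) (v1 v2 zeta w p rho : field) (X Y : R -> R -> R).
Hypotheses (HFr : Fr2 <> 0).
Hypotheses (HX : C1_map2 X) (HY : C1_map2 Y).
Hypotheses (Hv1 : C1_field v1) (Hv2 : C1_field v2) (Hzeta : C1_field zeta)
  (Hw : C1_field w) (Hp : C1_field p) (Hrho : C1_field rho).
Hypothesis Hrho_pos : forall x y t, 0 < rho x y t.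

Lemma continuous2_along_inv_rho : continuous2 (along X Y (fun x y t => / rho x y t)).
Proof.
  apply (continuous2_inv (along X Y rho)); [now apply continuous2_along_C1|].
  intros t s. apply Rgt_not_eq, Hrho_pos.
Qed.

Lemma continuous2_along_zeta_div_rho :
  continuous2 (along X Y (fun x y t => zeta x y t / rho x y t)).
Proof.
  apply (continuous2_mult (along X Y zeta)); [now apply continuous2_along_C1|].
  exact continuous2_along_inv_rho.
Qed.

Lemma oint_pressure_potential (t : R) :
  oint X Y t (fun x y t0 => - / rho x y t0)
    (fun x y t0 => p x y t0 + rho_ref * (zeta x y t0) ^ 2 / (2 * Fr2))
  = - oint X Y t (fun x y t0 => / rho x y t0) p
    - rho_ref / Fr2 * oint X Y t (fun x y t0 => zeta x y t0 / rho x y t0) zeta.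
Proof.
  rewrite (oint_along X Y HX HY _ p t Hp), (oint_along X Y HX HY _ zeta t Hzeta).
  erewrite oint_is_derive.
  2:{ intros s.
      apply (is_derive_ext
               (fun s' => along X Y p t s' + rho_ref * along X Y zeta t s' ^ 2 / (2 * Fr2)));
        [reflexivity|].
      auto_derive; [split; [|split]; auto; eexists; apply is_derive_along_s; assumption|].
      rewrite !(Derive_along X Y HX HY) by assumption. reflexivity. }
  apply is_RInt_unique.
  eapply is_RInt_ext; swap 1 2.
  - apply (is_RInt_minus (V := R_NormedModule));
      [apply (is_RInt_opp (V := R_NormedModule)) | apply (is_RInt_scal (V := R_NormedModule))];
      apply (RInt_correct (V := R_CompleteNormedModule)), ex_RInt_along_ds;
      auto using continuous2_along_inv_rho, continuous2_along_zeta_div_rho.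
  - intros s _. assert (Hr := Hrho_pos (X t s) (Y t s) t).
    unfold along, minus, opp, scal, plus; cbn. field. split; [assumption | lra].
Qed.

Lemma oint_kinetic_energy (t : R) :
  oint X Y t one_field (fun x y t0 => ((v1 x y t0) ^ 2 + (v2 x y t0) ^ 2) / 2)
  = oint X Y t v1 v1 + oint X Y t v2 v2.
Proof.
  rewrite (oint_along X Y HX HY _ v1 t Hv1), (oint_along X Y HX HY _ v2 t Hv2).
  erewrite oint_is_derive.
  2:{ intros s.
      apply (is_derive_ext (fun s' => (along X Y v1 t s' ^ 2 + along X Y v2 t s' ^ 2) / 2));
        [reflexivity|].
      auto_derive; [split; [|split]; auto; eexists; apply is_derive_along_s; assumption|].
      rewrite !(Derive_along X Y HX HY) by assumption. reflexivity. }
  apply is_RInt_unique.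
  eapply is_RInt_ext; swap 1 2.
  - apply (is_RInt_plus (V := R_NormedModule));
      apply (RInt_correct (V := R_CompleteNormedModule)), ex_RInt_along_ds;
      auto using continuous2_along_C1.
  - intros s _. unfold along, one_field, plus; cbn. field.
Qed.

Lemma oint_wave_energy (t : R) :
  oint X Y t one_field
    (fun x y t0 => / 2 * ((v1 x y t0) ^ 2 + (v2 x y t0) ^ 2 + sigma2 * (w x y t0) ^ 2))
  = oint X Y t v1 v1 + oint X Y t v2 v2 + sigma2 * oint X Y t w w.
Proof.
  rewrite (oint_along X Y HX HY _ v1 t Hv1), (oint_along X Y HX HY _ v2 t Hv2),
    (oint_along X Y HX HY _ w t Hw).
  erewrite oint_is_derive.
  2:{ intros s.
      apply (is_derive_ext (fun s' => / 2 * (along X Y v1 t s' ^ 2 + along X Y v2 t s' ^ 2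
                                             + sigma2 * along X Y w t s' ^ 2)));
        [reflexivity|].
      auto_derive;
        [repeat split; auto; eexists; apply is_derive_along_s; assumption|].
      rewrite !(Derive_along X Y HX HY) by assumption. reflexivity. }
  apply is_RInt_unique.
  eapply is_RInt_ext; swap 1 2.
  - apply (is_RInt_plus (V := R_NormedModule));
      [apply (is_RInt_plus (V := R_NormedModule)) | apply (is_RInt_scal (V := R_NormedModule))];
      apply (RInt_correct (V := R_CompleteNormedModule)), ex_RInt_along_ds;
      auto using continuous2_along_C1.
  - intros s _. unfold along, one_field, plus, scal; cbn. field.
Qed.

Lemma oint_wave_acceleration (t : R) :
  sigma2 <> 0 ->
  (forall x y t, mat_deriv v1 v2 w x y t
                 = - (rho_ref * zeta x y t / (sigma2 * Fr2 * rho x y t))) ->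
  oint X Y t (mat_deriv v1 v2 w) zeta
  = - (rho_ref / (sigma2 * Fr2)) * oint X Y t (fun x y t0 => zeta x y t0 / rho x y t0) zeta.
Proof.
  intros Hsigma Hwave.
  rewrite !(oint_along X Y HX HY _ zeta t Hzeta), <- RInt_scal_R
    by (apply (ex_RInt_along_ds X Y HX HY); [exact continuous2_along_zeta_div_rho | exact Hzeta]).
  apply RInt_ext_R. intros s _. unfold along. rewrite Hwave.
  assert (Hr := Hrho_pos (X t s) (Y t s) t).
  field. repeat split; [lra | assumption | assumption].
Qed.

End CurrentCirculation.

Theorem mainTheorem2
  (sigma2 Fr2 rho_ref : R) (v1 v2 zeta w p rho : field) (X Y : R -> R -> R)
  (* constants *)
  (Hsigma : 0 < sigma2) (HFr : 0 < Fr2) (Hrhoref : 0 < rho_ref)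
  (* regularity of the fields *)
  (Hv1 : C2_field v1) (Hv2 : C2_field v2) (Hzeta : C2_field zeta)
  (Hw : C2_field w) (Hp : C2_field p) (Hrho : C2_field rho)
  (Hrho_pos : forall x y t, 0 < rho x y t)
  (* D = 1, i.e. div v = 0 *)
  (Hdiv : forall x y t, d_x v1 x y t + d_y v2 x y t = 0)
  (* the buoyancy is advected by the horizontal flow *)
  (Hrho_adv : forall x y t, mat_deriv v1 v2 rho x y t = 0)
  (* wave equations *)
  (Hwave_w : forall x y t,
      mat_deriv v1 v2 w x y t = - (rho_ref * zeta x y t / (sigma2 * Fr2 * rho x y t)))
  (Hwave_zeta : forall x y t, mat_deriv v1 v2 zeta x y t = w x y t)
  (* the loop c(t) : s in [0,1] |-> (X t s, Y t s), closed and moving with v *)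
  (HX : C2_map2 X) (HY : C2_map2 Y)
  (Hclosed : forall t, X t 0 = X t 1 /\ Y t 0 = Y t 1)
  (HflowX : forall t s, is_derive (fun t' => X t' s) t (v1 (X t s) (Y t s) t))
  (HflowY : forall t s, is_derive (fun t' => Y t' s) t (v2 (X t s) (Y t s) t))
  (* the full Kelvin circulation theorem for this model, along the loop *)
  (Hkelvin : forall t,
      is_derive
        (fun t' => oint X Y t' v1 xcoord + oint X Y t' v2 ycoord
                   + oint X Y t' (fun x y t0 => sigma2 * w x y t0) zeta)
        t
        (oint X Y t (fun x y t0 => - / rho x y t0)
              (fun x y t0 => p x y t0 + rho_ref * (zeta x y t0) ^ 2 / (2 * Fr2))
         + oint X Y t one_field
              (fun x y t0 => / 2 * ((v1 x y t0) ^ 2 + (v2 x y t0) ^ 2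
                                    + sigma2 * (w x y t0) ^ 2)))) :
  (* Kelvin circulation theorem for the current alone *)
  forall t,
    is_derive (fun t' => oint X Y t' v1 xcoord + oint X Y t' v2 ycoord) t
      (- (oint X Y t (fun x y t0 => / rho x y t0) p
          - oint X Y t one_field (fun x y t0 => ((v1 x y t0) ^ 2 + (v2 x y t0) ^ 2) / 2))).
Proof.
  intros t.
  destruct Hv1 as [Hv1' _], Hv2 as [Hv2' _], Hp as [Hp' _], Hrho as [Hrho' _].
  destruct Hzeta as [Hzeta' [Hzeta_x [Hzeta_y _]]], Hw as [Hw' _].
  destruct HX as [HX' [_ HXs]], HY as [HY' [_ HYs]].
  assert (HFr' : Fr2 <> 0) by lra.
  assert (Hsigma' : sigma2 <> 0) by lra.
  assert (Hwave_part :
    is_derive (fun t' => oint X Y t' (fun x y t0 => sigma2 * w x y t0) zeta) t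
      (sigma2 * (oint X Y t (mat_deriv v1 v2 w) zeta + oint X Y t w w))).
  { apply (is_derive_ext (fun t' => sigma2 * oint X Y t' w zeta)).
    { intros t'. symmetry. apply oint_scal_l; auto using continuous2_along_C1. }
    apply (is_derive_scal (fun t' => oint X Y t' w zeta)).
    apply is_derive_oint; assumption. }
  pose proof (is_derive_minus _ _ t _ _ (Hkelvin t) Hwave_part) as Hcurrent.
  apply (is_derive_ext _ _ t _ (fun t' => Rplus_minus_r _ _)) in Hcurrent.
  refine (eq_ind _ (is_derive _ t) Hcurrent _ _).
  rewrite (oint_pressure_potential Fr2 rho_ref zeta p rho X Y HFr' HX' HY' Hzeta' Hp' Hrho'
             Hrho_pos),
    (oint_wave_energy sigma2 v1 v2 w X Y HX' HY' Hv1' Hv2' Hw'),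
    (oint_wave_acceleration sigma2 Fr2 rho_ref v1 v2 zeta w rho X Y HFr' HX' HY' Hzeta' Hrho'
       Hrho_pos t Hsigma' Hwave_w),
    (oint_kinetic_energy v1 v2 X Y HX' HY' Hv1' Hv2').
  cbv [minus plus opp]; cbn. field. auto.
Qed.
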